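(* Let $\beta,\gamma,\mu>0$, $0<p<1$, and $\delta=\beta/(\gamma+\mu)$. Consider the temporary adoption model $$S_0'=\mu-\beta S_0A-\mu S_0,\quad S_1'=(1-p)\beta S_0A-\beta S_1A-\mu S_1,\quad A'=\beta(pS_0+S_1)A-(\gamma+\mu)A,\quad R'=\gamma A-\mu R$$ on $\{S_0,S_1,A,R\ge0,\ S_0+S_1+A+R=1\}$. Its equilibria are the contagion-free equilibrium $E_0=(S_0,S_1,A,R)=(1,0,0,0)$ and points with $A\in\{A_1,A_2\}$, where $$A_{1,2}=\tfrac12\Big(1+\tfrac{\gamma}{\mu}\Big)^{-1}\Big[1-2\delta^{-1}\pm\sqrt{1-4(1-p)\delta^{-1}}\Big],$$ and $$S_0=\frac{1}{\delta(\frac{\gamma}{\mu}+1)A+1},\qquad S_1=(1-p)\frac{\delta(\frac{\gamma}{\mu}+1)A}{(\delta(\frac{\gamma}{\mu}+1)A+1)^2},\qquad R=\frac{\gamma}{\mu}A.$$ Call $E_i$ ($i=1,2$) the equilibrium with $A=A_i$ when $A_i$ is real and positive (an endemic equilibrium). Then: (I) If $p<\tfrac12$: for $\delta<4(1-p)$ there are no endemic equilibria; for $4(1-p)\le\delta<\tfrac1p$ there are two endemic equilibria $E_1,E_2$, which coincide when $\delta=4(1-p)$; for $\delta\ge\tfrac1p$ there is a unique endemic equilibrium $E_1$. (II) If $p\ge\tfrac12$: for $\delta\le\tfrac1p$ there is no endemic equilibrium; for $\delta>\tfrac1p$ there is a unique endemic equilibrium $E_1$.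
   Context: $S_0,S_1,A,R$ are the fractions of naive, informed, adopter and removed (former adopter, who never re-adopts) individuals; $\beta$ is the effective contact rate, $\mu$ the per capita demographic turnover rate, $\gamma$ the per capita rate of abandoning adoption, $p$ the probability of adoption on first effective contact with an adopter. $\delta=\beta/(\gamma+\mu)$ is the contact parameter. An endemic equilibrium is an equilibrium with $A>0$ and all components non-negative. *)

From Stdlib Require Import Reals.
Open Scope R_scope.

Definition delta (beta gamma mu : R) : R := beta / (gamma + mu).

Definition rhs_S0 (beta gamma mu p S0 S1 A Rm : R) : R := mu - beta * S0 * A - mu * S0.
Definition rhs_S1 (beta gamma mu p S0 S1 A Rm : R) : R :=
  (1 - p) * beta * S0 * A - beta * S1 * A - mu * S1.
Definition rhs_A (beta gamma mu p S0 S1 A Rm : R) : R :=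
  beta * (p * S0 + S1) * A - (gamma + mu) * A.
Definition rhs_R (beta gamma mu p S0 S1 A Rm : R) : R := gamma * A - mu * Rm.

Definition is_equilibrium (beta gamma mu p : R) (x : R * R * R * R) : Prop :=
  let '(S0, S1, A, Rm) := x in
  0 <= S0 /\ 0 <= S1 /\ 0 <= A /\ 0 <= Rm /\ S0 + S1 + A + Rm = 1 /\
  rhs_S0 beta gamma mu p S0 S1 A Rm = 0 /\
  rhs_S1 beta gamma mu p S0 S1 A Rm = 0 /\
  rhs_A beta gamma mu p S0 S1 A Rm = 0 /\
  rhs_R beta gamma mu p S0 S1 A Rm = 0.

Definition is_endemic (beta gamma mu p : R) (x : R * R * R * R) : Prop :=
  is_equilibrium beta gamma mu p x /\ 0 < snd (fst x).

Definition Aend1 (beta gamma mu p : R) : R :=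
  let d := delta beta gamma mu in
  / 2 * / (1 + gamma / mu) * (1 - 2 / d + sqrt (1 - 4 * (1 - p) / d)).
Definition Aend2 (beta gamma mu p : R) : R :=
  let d := delta beta gamma mu in
  / 2 * / (1 + gamma / mu) * (1 - 2 / d - sqrt (1 - 4 * (1 - p) / d)).

Definition E_of (beta gamma mu p A : R) : R * R * R * R :=
  let k := delta beta gamma mu * (gamma / mu + 1) * A in
  (1 / (k + 1), (1 - p) * k / ((k + 1) ^ 2), A, gamma / mu * A).

(* With the scaled adopter fraction k = beta A / mu (which is the quantity
   delta (gamma/mu + 1) A of the paper), the equations S0' = S1' = R' = 0 give
   S0 = 1/(k+1), S1 = (1-p) k/(k+1)^2 and R = (gamma/mu) A, and then A' = 0
   with A > 0 becomes delta (k + p) = (k + 1)^2, i.e. the quadratic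
   k^2 + (2 - delta) k + 1 - delta p = 0, whose roots are beta A_{1,2} / mu.
   Endemic equilibria thus correspond to the positive roots of this quadratic,
   and the case distinction of the theorem is the sign pattern of its roots,
   read off from the discriminant delta (delta - 4(1-p)), the sum delta - 2
   and the product 1 - delta p of the roots. *)

From Stdlib Require Import Reals Lra Psatz.
Open Scope R_scope.

Definition adoption_quadratic (d p k : R) : R := k ^ 2 + (2 - d) * k + 1 - d * p.

Definition disc_sqrt (d p : R) : R := sqrt (1 - 4 * (1 - p) / d).
Definition root_plus (d p : R) : R := (d - 2 + d * disc_sqrt d p) / 2.
Definition root_minus (d p : R) : R := (d - 2 - d * disc_sqrt d p) / 2.

Lemma adoption_quadratic_neq0_of_neg_disc d p k :
  0 < d -> d < 4 * (1 - p) -> adoption_quadratic d p k <> 0.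
Proof.
  intros hd hdisc. unfold adoption_quadratic.
  assert (4 * (k ^ 2 + (2 - d) * k + 1 - d * p)
          = (2 * k + 2 - d) ^ 2 + d * (4 * (1 - p) - d)) as hsquare by ring.
  assert (0 < d * (4 * (1 - p) - d)) by (apply Rmult_lt_0_compat; lra).
  pose proof (pow2_ge_0 (2 * k + 2 - d)). intros h. lra.
Qed.

Lemma adoption_quadratic_pos d p k :
  d <= 2 -> p * d <= 1 -> 0 < k -> 0 < adoption_quadratic d p k.
Proof. intros hd hpd hk. unfold adoption_quadratic. nra. Qed.

Lemma disc_nonneg_of_one_le_mul d p : 0 < p -> 1 <= p * d -> 4 * (1 - p) <= d.
Proof.
  intros hp hpd.
  assert (p * (d - 4 * (1 - p)) >= (2 * p - 1) ^ 2) by nra.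
  pose proof (pow2_ge_0 (2 * p - 1)). nra.
Qed.

Section Roots.

Variables d p : R.
Hypothesis hd : 0 < d.
Hypothesis hdisc : 4 * (1 - p) <= d.

Lemma disc_sqrt_spec : (d * disc_sqrt d p) ^ 2 = d * (d - 4 * (1 - p)).
Proof.
  assert (0 <= 1 - 4 * (1 - p) / d).
  { replace (1 - 4 * (1 - p) / d) with ((d - 4 * (1 - p)) * / d) by (field; lra).
    apply Rmult_le_pos; [lra | apply Rlt_le, Rinv_0_lt_compat; lra]. }
  unfold disc_sqrt.
  replace ((d * sqrt (1 - 4 * (1 - p) / d)) ^ 2)
    with (d * d * (sqrt (1 - 4 * (1 - p) / d) * sqrt (1 - 4 * (1 - p) / d))) by ring.
  rewrite sqrt_sqrt by assumption. field. lra.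
Qed.

Lemma root_plus_add_root_minus : root_plus d p + root_minus d p = d - 2.
Proof. unfold root_plus, root_minus. field. Qed.

Lemma root_plus_mul_root_minus : root_plus d p * root_minus d p = 1 - p * d.
Proof.
  unfold root_plus, root_minus.
  replace ((d - 2 + d * disc_sqrt d p) / 2 * ((d - 2 - d * disc_sqrt d p) / 2))
    with (((d - 2) ^ 2 - (d * disc_sqrt d p) ^ 2) / 4) by field.
  rewrite disc_sqrt_spec. field.
Qed.

Lemma root_minus_le_root_plus : root_minus d p <= root_plus d p.
Proof.
  unfold root_plus, root_minus.
  assert (0 <= d * disc_sqrt d p) by (apply Rmult_le_pos; [lra | apply sqrt_pos]).
  lra.
Qed.

Lemma adoption_quadratic_factor k :
  adoption_quadratic d p k = (k - root_plus d p) * (k - root_minus d p).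
Proof.
  transitivity (k ^ 2 - (root_plus d p + root_minus d p) * k
                + root_plus d p * root_minus d p).
  - rewrite root_plus_add_root_minus, root_plus_mul_root_minus.
    unfold adoption_quadratic. ring.
  - ring.
Qed.

Lemma adoption_quadratic_eq0 k :
  adoption_quadratic d p k = 0 <-> k = root_plus d p \/ k = root_minus d p.
Proof.
  rewrite adoption_quadratic_factor. split.
  - intros h. destruct (Rmult_integral _ _ h); [left | right]; lra.
  - intros [-> | ->]; ring.
Qed.

Lemma root_plus_eq_root_minus : root_plus d p = root_minus d p <-> d = 4 * (1 - p).
Proof.
  pose proof disc_sqrt_spec as hspec.
  assert (root_plus d p - root_minus d p = d * disc_sqrt d p) as hdiff
    by (unfold root_plus, root_minus; field).
  split; intros h.
  - assert (d * (d - 4 * (1 - p)) = 0) as h0.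
    { rewrite <- hspec, <- hdiff, h. ring. }
    destruct (Rmult_integral _ _ h0); lra.
  - assert ((d * disc_sqrt d p) ^ 2 = 0) as h0 by (rewrite hspec, h; ring).
    destruct (Req_dec (d * disc_sqrt d p) 0) as [h1 | h1]; [lra |].
    exfalso. exact (pow_nonzero _ 2 h1 h0).
Qed.

Lemma root_plus_pos : 2 < d \/ 1 < p * d -> 0 < root_plus d p.
Proof.
  pose proof root_plus_add_root_minus. pose proof root_plus_mul_root_minus.
  pose proof root_minus_le_root_plus.
  intros [h | h]; nra.
Qed.

Lemma root_minus_pos : 2 < d -> p * d < 1 -> 0 < root_minus d p.
Proof.
  pose proof root_plus_add_root_minus. pose proof root_plus_mul_root_minus.
  intros h2 hpd. nra.
Qed.

Lemma root_minus_nonpos : 1 <= p * d -> root_minus d p <= 0.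
Proof.
  pose proof root_plus_mul_root_minus. pose proof root_minus_le_root_plus.
  intros hpd. nra.
Qed.

End Roots.

Lemma rhs_sum beta gamma mu p S0 S1 A Rm :
  rhs_S0 beta gamma mu p S0 S1 A Rm + rhs_S1 beta gamma mu p S0 S1 A Rm
  + rhs_A beta gamma mu p S0 S1 A Rm + rhs_R beta gamma mu p S0 S1 A Rm
  = mu * (1 - (S0 + S1 + A + Rm)).
Proof. unfold rhs_S0, rhs_S1, rhs_A, rhs_R. ring. Qed.

Lemma E_of_inj beta gamma mu p A A' :
  E_of beta gamma mu p A = E_of beta gamma mu p A' -> A = A'.
Proof. intros e. exact (f_equal (fun x => snd (fst x)) e). Qed.

Section Model.

Variables beta gamma mu p : R.
Hypotheses (Hbeta : 0 < beta) (Hgamma : 0 < gamma) (Hmu : 0 < mu) (Hp1 : p < 1).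

Let d := delta beta gamma mu.

Lemma delta_pos : 0 < d.
Proof. apply Rdiv_lt_0_compat; lra. Qed.

Lemma scaled_adopters_pos k : 0 < k -> 0 < mu / beta * k.
Proof. intros hk. apply Rmult_lt_0_compat; [apply Rdiv_lt_0_compat |]; lra. Qed.

Lemma E_of_scaled k :
  E_of beta gamma mu p (mu / beta * k)
  = (1 / (k + 1), (1 - p) * k / (k + 1) ^ 2, mu / beta * k, gamma / mu * (mu / beta * k)).
Proof.
  unfold E_of.
  replace (delta beta gamma mu * (gamma / mu + 1) * (mu / beta * k)) with k
    by (unfold delta; field; lra).
  reflexivity.
Qed.

Lemma rhs_S0_eq0 k S0 S1 Rm : 0 <= k ->
  rhs_S0 beta gamma mu p S0 S1 (mu / beta * k) Rm = 0 <-> S0 = 1 / (k + 1).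
Proof.
  intros hk. unfold rhs_S0.
  replace (mu - beta * S0 * (mu / beta * k) - mu * S0) with (mu * (1 - S0 * (k + 1)))
    by (field; lra).
  split; intros h.
  - destruct (Rmult_integral _ _ h) as [h' | h']; [lra |].
    apply (Rmult_eq_reg_r (k + 1)); [| lra]. field_simplify; lra.
  - rewrite h. field. lra.
Qed.

Lemma rhs_S1_eq0 k S1 Rm : 0 <= k ->
  rhs_S1 beta gamma mu p (1 / (k + 1)) S1 (mu / beta * k) Rm = 0
  <-> S1 = (1 - p) * k / (k + 1) ^ 2.
Proof.
  intros hk. unfold rhs_S1.
  replace ((1 - p) * beta * (1 / (k + 1)) * (mu / beta * k) - beta * S1 * (mu / beta * k)
           - mu * S1)
    with (mu * (k + 1) * ((1 - p) * k / (k + 1) ^ 2 - S1)) by (field; lra).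
  split; intros h.
  - destruct (Rmult_integral _ _ h) as [h' | h']; [nra | lra].
  - rewrite h. ring.
Qed.

Lemma rhs_R_eq0 S0 S1 A Rm :
  rhs_R beta gamma mu p S0 S1 A Rm = 0 <-> Rm = gamma / mu * A.
Proof.
  unfold rhs_R. split; intros h.
  - apply (Rmult_eq_reg_l mu); [| lra]. field_simplify; lra.
  - rewrite h. field. lra.
Qed.

Lemma rhs_A_scaled k A Rm : 0 <= k ->
  (k + 1) ^ 2 * rhs_A beta gamma mu p (1 / (k + 1)) ((1 - p) * k / (k + 1) ^ 2) A Rm
  = - ((gamma + mu) * A * adoption_quadratic d p k).
Proof.
  intros hk. unfold rhs_A, adoption_quadratic, d, delta. field. lra.
Qed.

Lemma endemic_E_of_iff k : 0 < k ->
  is_endemic beta gamma mu p (E_of beta gamma mu p (mu / beta * k))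
  <-> adoption_quadratic d p k = 0.
Proof.
  intros hk. rewrite E_of_scaled. unfold is_endemic, is_equilibrium. cbn [fst snd].
  pose proof (scaled_adopters_pos k hk) as hA.
  pose proof (rhs_A_scaled k (mu / beta * k) (gamma / mu * (mu / beta * k)) (Rlt_le _ _ hk))
    as hrhsA.
  split.
  - intros [[_ [_ [_ [_ [_ [_ [_ [eA _]]]]]]]] _].
    rewrite eA, Rmult_0_r in hrhsA.
    assert (0 < (gamma + mu) * (mu / beta * k)) by (apply Rmult_lt_0_compat; lra).
    assert ((gamma + mu) * (mu / beta * k) * adoption_quadratic d p k = 0) as h by lra.
    destruct (Rmult_integral _ _ h); [lra | assumption].
  - intros hq.
    assert (rhs_A beta gamma mu p (1 / (k + 1)) ((1 - p) * k / (k + 1) ^ 2) (mu / beta * k)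
              (gamma / mu * (mu / beta * k)) = 0) as eA.
    { rewrite hq, Rmult_0_r, Ropp_0 in hrhsA.
      destruct (Rmult_integral _ _ hrhsA) as [h | h]; [nra | exact h]. }
    assert (e0 := proj2 (rhs_S0_eq0 k _ ((1 - p) * k / (k + 1) ^ 2)
                           (gamma / mu * (mu / beta * k)) (Rlt_le _ _ hk)) eq_refl).
    assert (e1 := proj2 (rhs_S1_eq0 k _ (gamma / mu * (mu / beta * k)) (Rlt_le _ _ hk)) eq_refl).
    assert (eR := proj2 (rhs_R_eq0 (1 / (k + 1)) ((1 - p) * k / (k + 1) ^ 2)
                           (mu / beta * k) _) eq_refl).
    pose proof (rhs_sum beta gamma mu p (1 / (k + 1)) ((1 - p) * k / (k + 1) ^ 2)
                  (mu / beta * k) (gamma / mu * (mu / beta * k))) as hsum.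
    rewrite e0, e1, eA, eR in hsum.
    assert (0 < gamma / mu) by (apply Rdiv_lt_0_compat; lra).
    assert (0 <= (1 - p) * k / (k + 1) ^ 2)
      by (apply Rmult_le_pos; [nra | apply Rlt_le, Rinv_0_lt_compat; nra]).
    repeat split; try assumption; try nra.
    apply Rlt_le, Rdiv_lt_0_compat; lra.
Qed.

Lemma endemic_is_E_of x : is_endemic beta gamma mu p x ->
  exists k, 0 < k /\ x = E_of beta gamma mu p (mu / beta * k).
Proof.
  destruct x as [[[S0 S1] A] Rm]. unfold is_endemic, is_equilibrium. cbn [fst snd].
  intros [[_ [_ [_ [_ [_ [e0 [e1 [_ eR]]]]]]]] hA].
  exists (beta * A / mu). split; [apply Rdiv_lt_0_compat; nra |].
  assert (A = mu / beta * (beta * A / mu)) as hA' by (field; lra).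
  rewrite E_of_scaled, <- hA'. rewrite hA' in e0, e1.
  assert (0 <= beta * A / mu) as hk by (apply Rlt_le, Rdiv_lt_0_compat; nra).
  apply (rhs_S0_eq0 _ _ _ _ hk) in e0. rewrite e0 in e1.
  apply (rhs_S1_eq0 _ _ _ hk) in e1. apply rhs_R_eq0 in eR.
  subst. reflexivity.
Qed.

Lemma endemic_iff_root x : is_endemic beta gamma mu p x <->
  exists k, 0 < k /\ adoption_quadratic d p k = 0 /\ x = E_of beta gamma mu p (mu / beta * k).
Proof.
  split.
  - intros hx. destruct (endemic_is_E_of x hx) as [k [hk ->]].
    exists k. split; [exact hk | split; [apply endemic_E_of_iff |]]; auto.
  - intros [k [hk [hq ->]]]. apply endemic_E_of_iff; assumption.
Qed.

Lemma no_endemic_of_no_pos_root :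
  (forall k, 0 < k -> adoption_quadratic d p k <> 0) ->
  forall x, ~ is_endemic beta gamma mu p x.
Proof.
  intros h x hx. apply endemic_iff_root in hx.
  destruct hx as [k [hk [hq _]]]. exact (h k hk hq).
Qed.

Lemma Aend1_scaled : Aend1 beta gamma mu p = mu / beta * root_plus d p.
Proof.
  unfold Aend1, root_plus, disc_sqrt, d, delta. field. repeat split; intro; lra.
Qed.

Lemma Aend2_scaled : Aend2 beta gamma mu p = mu / beta * root_minus d p.
Proof.
  unfold Aend2, root_minus, disc_sqrt, d, delta. field. repeat split; intro; lra.
Qed.

Section Nonnegative_discriminant.

Hypothesis hdisc : 4 * (1 - p) <= d.

Let E1 := E_of beta gamma mu p (Aend1 beta gamma mu p).
Let E2 := E_of beta gamma mu p (Aend2 beta gamma mu p).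

Lemma endemic_iff_roots x : is_endemic beta gamma mu p x <->
  (0 < root_plus d p /\ x = E1) \/ (0 < root_minus d p /\ x = E2).
Proof.
  unfold E1, E2. rewrite endemic_iff_root, Aend1_scaled, Aend2_scaled.
  pose proof delta_pos as hd.
  split.
  - intros [k [hk [hq ->]]].
    destruct (proj1 (adoption_quadratic_eq0 d p hd hdisc k) hq) as [-> | ->]; auto.
  - intros [[hk ->] | [hk ->]]; eexists; split; try exact hk;
      split; try reflexivity; apply adoption_quadratic_eq0; auto.
Qed.

Lemma unique_endemic : root_minus d p <= 0 < root_plus d p ->
  0 < Aend1 beta gamma mu p /\ is_endemic beta gamma mu p E1 /\
  (forall x, is_endemic beta gamma mu p x <-> x = E1).
Proof.
  intros [hminus hplus].
  assert (forall x, is_endemic beta gamma mu p x <-> x = E1) as huniq.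
  { intros x. rewrite endemic_iff_roots. intuition lra. }
  rewrite Aend1_scaled. split; [apply scaled_adopters_pos; exact hplus |].
  split; [apply huniq; reflexivity | exact huniq].
Qed.

Lemma two_endemic : 0 < root_minus d p ->
  0 < Aend1 beta gamma mu p /\ 0 < Aend2 beta gamma mu p /\
  is_endemic beta gamma mu p E1 /\ is_endemic beta gamma mu p E2 /\
  (forall x, is_endemic beta gamma mu p x <-> x = E1 \/ x = E2) /\
  (E1 = E2 <-> d = 4 * (1 - p)).
Proof.
  intros hminus. pose proof delta_pos as hd.
  assert (0 < root_plus d p) as hplus
    by (pose proof (root_minus_le_root_plus d p hd); lra).
  assert (forall x, is_endemic beta gamma mu p x <-> x = E1 \/ x = E2) as hall.
  { intros x. rewrite endemic_iff_roots. intuition. }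
  split; [rewrite Aend1_scaled; apply scaled_adopters_pos; exact hplus |].
  split; [rewrite Aend2_scaled; apply scaled_adopters_pos; exact hminus |].
  split; [apply hall; left; reflexivity |].
  split; [apply hall; right; reflexivity |].
  split; [exact hall |].
  unfold E1, E2.
  rewrite Aend1_scaled, Aend2_scaled, <- (root_plus_eq_root_minus d p hd hdisc).
  split; [intros e | intros ->; reflexivity].
  apply E_of_inj, Rmult_eq_reg_l in e; [exact e |].
  apply Rgt_not_eq, Rdiv_lt_0_compat; lra.
Qed.

End Nonnegative_discriminant.

End Model.

Theorem mainTheorem4 (beta gamma mu p : R)
  (Hbeta : 0 < beta) (Hgamma : 0 < gamma) (Hmu : 0 < mu)
  (Hp0 : 0 < p) (Hp1 : p < 1) :
  let d := delta beta gamma mu in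
  let a1 := Aend1 beta gamma mu p in
  let a2 := Aend2 beta gamma mu p in
  let E1 := E_of beta gamma mu p a1 in
  let E2 := E_of beta gamma mu p a2 in
  (* (I) *)
  (p < 1 / 2 ->
     (d < 4 * (1 - p) -> forall x, ~ is_endemic beta gamma mu p x) /\
     (4 * (1 - p) <= d < 1 / p ->
        0 < a1 /\ 0 < a2 /\
        is_endemic beta gamma mu p E1 /\ is_endemic beta gamma mu p E2 /\
        (forall x, is_endemic beta gamma mu p x <-> x = E1 \/ x = E2) /\
        (E1 = E2 <-> d = 4 * (1 - p))) /\
     (1 / p <= d ->
        0 < a1 /\ is_endemic beta gamma mu p E1 /\
        (forall x, is_endemic beta gamma mu p x <-> x = E1))) /\
  (* (II) *)
  (1 / 2 <= p ->
     (d <= 1 / p -> forall x, ~ is_endemic beta gamma mu p x) /\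
     (1 / p < d ->
        0 < a1 /\ is_endemic beta gamma mu p E1 /\
        (forall x, is_endemic beta gamma mu p x <-> x = E1))).
Proof.
  intros d a1 a2 E1 E2.
  assert (0 < d) as hd by (apply delta_pos; assumption).
  assert (p * (d - 1 / p) = p * d - 1) as hinv by (field; lra).
  split; intros hp.
  - split; [| split].
    + intros hdisc. apply no_endemic_of_no_pos_root; try assumption.
      intros k _. apply adoption_quadratic_neq0_of_neg_disc; assumption.
    + intros [hdisc hpd]. assert (2 < d) by lra. assert (p * d < 1) by nra.
      apply two_endemic; try assumption.
      apply root_minus_pos; assumption.
    + intros hpd. assert (1 <= p * d) by nra.
      assert (4 * (1 - p) <= d) as hdisc by (apply disc_nonneg_of_one_le_mul; assumption).
      apply unique_endemic; try assumption. split.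
      * apply root_minus_nonpos; assumption.
      * assert (2 < d) by nra. apply root_plus_pos; auto.
  - split.
    + intros hpd. apply no_endemic_of_no_pos_root; try assumption.
      assert (p * d <= 1) by nra. assert (d <= 2) by nra.
      intros k hk. apply Rgt_not_eq, adoption_quadratic_pos; assumption.
    + intros hpd. assert (1 < p * d) by nra. assert (1 <= p * d) by lra.
      assert (4 * (1 - p) <= d) as hdisc by (apply disc_nonneg_of_one_le_mul; assumption).
      apply unique_endemic; try assumption. split.
      * apply root_minus_nonpos; assumption.
      * apply root_plus_pos; auto.
Qed.
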